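(* Let $N\in\mathbb{N}$, $a_1,\dots,a_N\in\mathbb{C}\setminus\{0\}$, $z_1,\dots,z_N\in\mathbb{D}:=\{z\in\mathbb{C}:0<|z|<1\}$ pairwise distinct, and $\mathbf f=(f_k)_{k=0}^\infty$ with $f_k=\sum_{j=1}^N a_jz_j^k$. Let $\sigma_l$, $l\in\{0,\dots,N-1\}$, be a nonzero singular value of $\mathbf\Gamma_{\mathbf f}=(f_{k+j})_{k,j\ge0}$ of multiplicity one, and let $\mathbf v^{(l)}=(v^{(l)}_k)_{k\ge0}\in\ell^2\setminus\{0\}$ be a corresponding con-eigenvector, i.e. $\mathbf\Gamma_{\mathbf f}\overline{\mathbf v^{(l)}}=\sigma_l\mathbf v^{(l)}$. Then $$v^{(l)}_k=\frac{1}{\sigma_l}\sum_{j=1}^N a_j\,P_{\overline{\mathbf v^{(l)}}}(z_j)\,z_j^k,\qquad k\in\mathbb{N}_0,$$ where $P_{\overline{\mathbf v^{(l)}}}(z_j)=\overline{P_{\mathbf v^{(l)}}(\overline{z_j})}$, and the vector $\mathbf y=(y_r)_{r=1}^N:=(P_{\mathbf v^{(l)}}(\overline{z_r}))_{r=1}^N$ satisfies the finite con-eigenvalue system $$\sigma_l\,y_r=\sum_{j=1}^N\frac{a_j}{1-z_j\overline{z_r}}\,\overline{y_j},\qquad r=1,\dots,N.$$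
   Context: $\mathbf\Gamma_{\mathbf f}$ acts on $\ell^2(\mathbb{N}_0)$ by $(\mathbf\Gamma_{\mathbf f}\mathbf v)_k=\sum_{j\ge0}f_{k+j}v_j$. $\overline{\mathbf v}$ is the componentwise conjugate. For $\mathbf v\in\ell^2$, $P_{\mathbf v}(z)=\sum_{k\ge0}v_kz^k$ for $|z|<1$. *)

From Stdlib Require Import Reals.
From Coquelicot Require Import Coquelicot.
Open Scope R_scope.

(* Sum of a complex series (total operator): real and imaginary parts summed
   separately; equals the true sum whenever the series converges. *)
Definition CSeries (a : nat -> C) : C :=
  (Series (fun n => fst (a n)), Series (fun n => snd (a n))).

Fixpoint csum (n : nat) (g : nat -> C) : C :=
  match n with
  | O => 0%C
  | S m => (csum m g + g m)%C
  end.

Definition l2 (v : nat -> C) : Prop := ex_series (fun k => (Cmod (v k)) ^ 2).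

Definition vconj (v : nat -> C) : nat -> C := fun k => Cconj (v k).

Definition hankel (f v : nat -> C) : nat -> C :=
  fun k => CSeries (fun j => (f (k + j)%nat * v j)%C).

Definition hankel_adj (f w : nat -> C) : nat -> C :=
  fun k => CSeries (fun j => (Cconj (f (k + j)%nat) * w j)%C).

Definition Pgen (v : nat -> C) (z : C) : C :=
  CSeries (fun k => (v k * z ^ k)%C).

Definition sv_space (f : nat -> C) (s : R) (u : nat -> C) : Prop :=
  l2 u /\ forall k, hankel_adj f (hankel f u) k = (RtoC (s ^ 2) * u k)%C.

Definition simple_nonzero_singular_value (f : nat -> C) (s : R) : Prop :=
  0 < s /\
  exists w, sv_space f s w /\ (exists k, w k <> 0%C) /\
    forall u, sv_space f s u -> exists c : C, forall k, u k = (c * w k)%C.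

(** Since [f (k + j) = sum_i a_i z_i^k z_i^j], the Hankel operator maps every
    [u] in l^2 to the exponential sum [sum_i a_i P_u(z_i) z_i^k]: this only
    exchanges a finite sum with a convergent series.  For a con-eigenvector
    this is the formula for [v_k].  Evaluating the generating function of
    that exponential sum at [conj z_r] turns each geometric sequence
    [z_j^k] into [1 / (1 - z_j conj z_r)], which is the finite system. *)

From Stdlib Require Import Reals Lra Lia.
From Coquelicot Require Import Coquelicot.
Open Scope R_scope.

Definition is_cseries (a : nat -> C) (l : C) : Prop :=
  is_series (fun n => fst (a n)) (fst l) /\ is_series (fun n => snd (a n)) (snd l).

Lemma is_cseries_unique a l : is_cseries a l -> CSeries a = l.
Proof.
  intros [H1 H2]. unfold CSeries.
  rewrite (is_series_unique _ _ H1), (is_series_unique _ _ H2).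
  destruct l; reflexivity.
Qed.

Lemma is_cseries_ext a b l : (forall n, a n = b n) -> is_cseries a l -> is_cseries b l.
Proof.
  intros E [H1 H2]; split.
  - apply (is_series_ext _ _ _ (fun n => f_equal fst (E n)) H1).
  - apply (is_series_ext _ _ _ (fun n => f_equal snd (E n)) H2).
Qed.

Lemma is_series_0 : is_series (fun _ => 0) 0.
Proof.
  change (is_lim_seq (sum_n (fun _ : nat => 0)) 0).
  apply (is_lim_seq_ext (fun _ => 0)); [intros n; rewrite sum_n_const; ring | ].
  apply is_lim_seq_const.
Qed.

Lemma is_cseries_0 : is_cseries (fun _ => 0%C) 0%C.
Proof. split; exact is_series_0. Qed.

Lemma is_cseries_plus a b la lb :
  is_cseries a la -> is_cseries b lb -> is_cseries (fun n => (a n + b n)%C) (la + lb)%C.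
Proof.
  intros [H1 H2] [H3 H4]; split.
  - exact (is_series_plus _ _ _ _ H1 H3).
  - exact (is_series_plus _ _ _ _ H2 H4).
Qed.

Lemma is_cseries_scal_l c a l : is_cseries a l -> is_cseries (fun n => (c * a n)%C) (c * l)%C.
Proof.
  intros [H1 H2]; split; simpl.
  - exact (is_series_minus _ _ _ _ (is_series_scal_l (fst c) _ _ H1)
                                   (is_series_scal_l (snd c) _ _ H2)).
  - exact (is_series_plus _ _ _ _ (is_series_scal_l (fst c) _ _ H2)
                                  (is_series_scal_l (snd c) _ _ H1)).
Qed.

Lemma is_cseries_incr_1 a l : is_cseries a l -> is_cseries (fun n => a (S n)) (l - a O)%C.
Proof.
  intros [H1 H2]; split.
  - apply (is_series_incr_1 (V := R_NormedModule) (fun n => fst (a n))).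
    replace (plus _ _) with (fst l) by (simpl; unfold plus; simpl; ring). exact H1.
  - apply (is_series_incr_1 (V := R_NormedModule) (fun n => snd (a n))).
    replace (plus _ _) with (snd l) by (simpl; unfold plus; simpl; ring). exact H2.
Qed.

Lemma is_cseries_Cmod a : ex_series (fun n => Cmod (a n)) -> is_cseries a (CSeries a).
Proof.
  intros Ha.
  assert (Hpart : forall p : C -> R, (forall w, Rabs (p w) <= Cmod w) ->
            ex_series (fun n => p (a n))).
  { intros p Hp. apply ex_series_Rabs.
    apply (ex_series_le (K := R_AbsRing) (V := R_CompleteNormedModule)
             _ (fun n => Cmod (a n))); [ | exact Ha].
    intros n. unfold norm; simpl; unfold abs; simpl. rewrite Rabs_Rabsolu. apply Hp. }
  split; apply Series_correct, Hpart; intros w.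
  - pose proof (Rmax_Cmod w). pose proof (Rmax_l (Rabs (fst w)) (Rabs (snd w))). lra.
  - pose proof (Rmax_Cmod w). pose proof (Rmax_r (Rabs (fst w)) (Rabs (snd w))). lra.
Qed.

Lemma is_cseries_geom (w : C) : Cmod w < 1 -> is_cseries (fun k => w ^ k)%C (/ (1 - w))%C.
Proof.
  intros Hw.
  assert (Hne : (1 - w)%C <> 0%C).
  { intros E. apply Ceq_minus in E. rewrite <- E, Cmod_1 in Hw. lra. }
  set (l := CSeries (fun k => w ^ k)%C).
  assert (Hl : is_cseries (fun k => w ^ k)%C l).
  { apply is_cseries_Cmod.
    apply (ex_series_ext (fun k => Cmod w ^ k)); [intros k; rewrite Cmod_pow; reflexivity | ].
    apply ex_series_geom. rewrite Rabs_pos_eq by apply Cmod_ge_0. exact Hw. }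
  (* The shifted series is both [l - 1] and [w * l]. *)
  assert (Hshift : (l - 1 = w * l)%C).
  { transitivity (CSeries (fun k => w ^ S k))%C.
    - symmetry. apply is_cseries_unique. exact (is_cseries_incr_1 _ _ Hl).
    - apply is_cseries_unique, (is_cseries_ext (fun k => w * w ^ k)%C); [reflexivity | ].
    apply is_cseries_scal_l, Hl. }
  replace (/ (1 - w))%C with l; [exact Hl | ].
  transitivity ((l - w * l) * / (1 - w))%C; [field; exact Hne | ].
  rewrite <- Hshift. ring.
Qed.

Lemma ex_series_Cmod_l2_geom (u : nat -> C) (z : C) :
  l2 u -> Cmod z < 1 -> ex_series (fun k => Cmod (u k * z ^ k)).
Proof.
  intros Hu Hz.
  pose proof (Cmod_ge_0 z) as Hz0.
  assert (Hb : ex_series (fun k => (Cmod (u k) ^ 2 + (Cmod z ^ 2) ^ k) / 2)).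
  { apply (ex_series_ext (fun k => scal (/ 2) (plus (Cmod (u k) ^ 2) ((Cmod z ^ 2) ^ k)))).
    { intros k. change (/ 2 * (Cmod (u k) ^ 2 + (Cmod z ^ 2) ^ k) = (Cmod (u k) ^ 2 + (Cmod z ^ 2) ^ k) / 2).
      field. }
    apply (ex_series_scal (K := R_AbsRing) (V := R_NormedModule)).
    apply (ex_series_plus (K := R_AbsRing) (V := R_NormedModule)); [exact Hu | ].
    apply ex_series_geom. rewrite Rabs_pos_eq; nra. }
  apply (ex_series_le (K := R_AbsRing) (V := R_CompleteNormedModule)
           _ (fun k => (Cmod (u k) ^ 2 + (Cmod z ^ 2) ^ k) / 2)); [ | exact Hb].
  intros k. change (Rabs (Cmod (u k * z ^ k)) <= (Cmod (u k) ^ 2 + (Cmod z ^ 2) ^ k) / 2).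
  rewrite Rabs_pos_eq by apply Cmod_ge_0.
  rewrite Cmod_mult, Cmod_pow, <- pow_mult, Nat.mul_comm, pow_mult.
  (* AM-GM: [x y <= (x^2 + y^2) / 2]. *)
  pose proof (pow2_ge_0 (Cmod (u k) - Cmod z ^ k)). nra.
Qed.

Lemma is_cseries_Pgen (u : nat -> C) (z : C) :
  l2 u -> Cmod z < 1 -> is_cseries (fun k => (u k * z ^ k)%C) (Pgen u z).
Proof. intros Hu Hz. apply is_cseries_Cmod, ex_series_Cmod_l2_geom; assumption. Qed.

Lemma l2_vconj (v : nat -> C) : l2 v -> l2 (vconj v).
Proof.
  unfold l2, vconj. apply ex_series_ext. intros k. rewrite Cmod_conj. reflexivity.
Qed.

Lemma Pgen_vconj (v : nat -> C) (w : C) : Pgen (vconj v) w = Cconj (Pgen v (Cconj w)).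
Proof.
  unfold Pgen, CSeries, Cconj at 1; simpl. f_equal; [ | rewrite <- Series_opp];
    apply Series_ext; intros k; rewrite <- Cpow_conj; unfold vconj;
    destruct (v k) as [p q]; destruct (w ^ k)%C as [x y]; simpl; ring.
Qed.

Lemma csum_ext N g h : (forall i, g i = h i) -> csum N g = csum N h.
Proof. intros E; induction N as [|N IH]; simpl; [reflexivity | rewrite IH, E; reflexivity]. Qed.

Lemma csum_mult_r N g x : (csum N g * x = csum N (fun i => g i * x))%C.
Proof. induction N as [|N IH]; simpl; [ring | rewrite <- IH; ring]. Qed.

Lemma is_cseries_csum N (g : nat -> nat -> C) l :
  (forall i, (i < N)%nat -> is_cseries (g i) (l i)) ->
  is_cseries (fun k => csum N (fun i => g i k)) (csum N l).
Proof.
  induction N as [|N IH]; intros H; simpl.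
  - exact is_cseries_0.
  - apply is_cseries_plus; [apply IH; intros; apply H | apply H]; lia.
Qed.

Lemma is_cseries_exp_sum_geom N (b z : nat -> C) (w : C) :
  (forall j, (j < N)%nat -> Cmod (z j * w) < 1) ->
  is_cseries (fun k => csum N (fun j => b j * z j ^ k) * w ^ k)%C
             (csum N (fun j => b j / (1 - z j * w)))%C.
Proof.
  intros Hzw.
  apply (is_cseries_ext (fun k => csum N (fun j => b j * (z j * w) ^ k)))%C.
  { intros k. rewrite csum_mult_r. apply csum_ext. intros j. rewrite Cpow_mult_l. ring. }
  apply is_cseries_csum. intros j Hj. apply is_cseries_scal_l, is_cseries_geom, Hzw, Hj.
Qed.

Lemma hankel_exp_sum N (a z f u : nat -> C) :
  (forall k, f k = csum N (fun j => a j * z j ^ k)%C) ->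
  (forall j, (j < N)%nat -> Cmod (z j) < 1) ->
  l2 u ->
  forall k, hankel f u k = csum N (fun j => a j * Pgen u (z j) * z j ^ k)%C.
Proof.
  intros Hf Hz Hu k. apply is_cseries_unique.
  apply (is_cseries_ext (fun n => csum N (fun j => (a j * z j ^ k) * (u n * z j ^ n))))%C.
  { intros n. rewrite Hf, csum_mult_r. apply csum_ext. intros j. rewrite Cpow_add_r. ring. }
  replace (csum N (fun j => a j * Pgen u (z j) * z j ^ k))%C
    with (csum N (fun j => (a j * z j ^ k) * Pgen u (z j)))%C
    by (apply csum_ext; intros j; ring).
  apply is_cseries_csum. intros j Hj. apply is_cseries_scal_l, is_cseries_Pgen, Hz, Hj; exact Hu.
Qed.

Theorem theorem3p2
  (N : nat) (a z : nat -> C)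
  (Ha : forall j, (j < N)%nat -> a j <> 0%C)
  (Hz : forall j, (j < N)%nat -> 0 < Cmod (z j) < 1)
  (Hdist : forall i j, (i < N)%nat -> (j < N)%nat -> i <> j -> z i <> z j)
  (f : nat -> C)
  (Hf : forall k, f k = csum N (fun j => (a j * z j ^ k)%C))
  (sigma : R)
  (Hsigma : simple_nonzero_singular_value f sigma)
  (v : nat -> C)
  (Hv : l2 v) (Hv0 : exists k, v k <> 0%C)
  (Hcon : forall k, hankel f (vconj v) k = (RtoC sigma * v k)%C) :
  (forall k,
     v k = (/ RtoC sigma *
            csum N (fun j => a j * Pgen (vconj v) (z j) * z j ^ k))%C)
  /\ (forall j, (j < N)%nat ->
        Pgen (vconj v) (z j) = Cconj (Pgen v (Cconj (z j))))
  /\ (forall r, (r < N)%nat ->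
        (RtoC sigma * Pgen v (Cconj (z r)))%C =
        csum N (fun j => a j / (1 - z j * Cconj (z r))
                         * Cconj (Pgen v (Cconj (z j))))%C).
Proof.
  destruct Hsigma as [Hsigma0 _].
  assert (Hsigma_ne : RtoC sigma <> 0%C) by (intros E; apply RtoC_inj in E; lra).
  assert (Hz1 : forall j, (j < N)%nat -> Cmod (z j) < 1) by (intros j Hj; apply Hz, Hj).
  assert (Hconeig : forall k, (RtoC sigma * v k)%C =
            csum N (fun j => a j * Pgen (vconj v) (z j) * z j ^ k)%C).
  { intros k. rewrite <- Hcon. apply hankel_exp_sum; [exact Hf | exact Hz1 | apply l2_vconj, Hv]. }
  split; [ | split].
  - intros k. rewrite <- Hconeig. field. exact Hsigma_ne.
  - intros j _. apply Pgen_vconj.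
  - intros r Hr.
    assert (Hzr : Cmod (Cconj (z r)) < 1) by (rewrite Cmod_conj; apply Hz1, Hr).
    rewrite <- (is_cseries_unique _ _ (is_cseries_scal_l (RtoC sigma) _ _
                                        (is_cseries_Pgen _ _ Hv Hzr))).
    transitivity (csum N (fun j => a j * Pgen (vconj v) (z j) / (1 - z j * Cconj (z r))))%C.
    + apply is_cseries_unique.
      apply (is_cseries_ext (fun k => csum N (fun j => a j * Pgen (vconj v) (z j) * z j ^ k)
                                      * Cconj (z r) ^ k))%C.
      { intros k. rewrite <- Hconeig. ring. }
      apply is_cseries_exp_sum_geom. intros j Hj.
      rewrite Cmod_mult, Cmod_conj. pose proof (Hz j Hj). pose proof (Hz r Hr). nra.
    + apply csum_ext. intros j. rewrite Pgen_vconj. unfold Cdiv. ring.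
Qed.
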